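(* Assume the setting of the context. Suppose $\gamma\in\mathcal{P}(S^K)$ is such that $\mathcal{M}(\gamma)=\{\nu\in\mathcal{P}(S^K):\gamma=M\nu\}$ is non-empty. Then $\inf\{J(\nu):\nu\in\mathcal{M}(\gamma)\}$ is attained at the symmetric measure \[ \nu_{sym}(\mathbf{x})=\frac{\gamma(\mathbf{x})}{K!\,\rho(\mathbf{x})},\qquad \mathbf{x}\in S^K. \]
   Context: **State space and dynamics.** $S$ is a finite set and $K\ge2$ an integer. For $k=1,\dots,K$, $\Gamma^k$ is an irreducible intensity matrix on $S$. It is reversible with respect to its unique invariant distribution $\mu_k$ (so $\mu_k>0$). Set $\mu=\mu_1\times\cdots\times\mu_K$. **Permutations and weights.** $\Sigma_K$ is the set of permutations of $\{1,\dots,K\}$, and $\mathbf{x}^\sigma=(x_{\sigma^{-1}(1)},\dots,x_{\sigma^{-1}(K)})$. Define $\rho(\mathbf{x})=\mu(\mathbf{x})/\sum_{\sigma'}\mu(\mathbf{x}^{\sigma'})$. **Infinite swapping rates.** - $\Gamma^\infty$ is the rate matrix on $S^K$ with $\Gamma^\infty_{\mathbf{x},\mathbf{y}}=\sum_\sigma\rho(\mathbf{x}^\sigma)\Gamma^{\sigma(i)}_{x_i,y_i}$ when $\mathbf{y}$ differs from $\mathbf{x}$ exactly in coordinate $i$. - Off-diagonal rates between states differing in two or more coordinates are $0$. - $q^\infty(\mathbf{x})=\sum_{\mathbf{y}\ne\mathbf{x}}\Gamma^\infty_{\mathbf{x},\mathbf{y}}$. - $\bar\mu(\mathbf{x})=\frac1{K!}\sum_\sigma\mu(\mathbf{x}^\sigma)$.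 **Map and functional.** - $(M\nu)(\mathbf{x})=\rho(\mathbf{x})\sum_{\sigma}\nu(\mathbf{x}^\sigma)$ for $\nu\in\mathcal{P}(S^K)$. - For $\nu\in\mathcal{P}(S^K)$ with $\theta=\nu/\bar\mu$, \[ J(\nu)=\sum_{\mathbf{x}}q^\infty(\mathbf{x})\theta(\mathbf{x})\bar\mu(\mathbf{x})-\sum_{\mathbf{x}\ne\mathbf{y}}\theta^{1/2}(\mathbf{x})\theta^{1/2}(\mathbf{y})\Gamma^\infty_{\mathbf{x},\mathbf{y}}\bar\mu(\mathbf{x}). \] *)

From HB Require Import structures.
From mathcomp Require Import all_boot all_order all_algebra all_fingroup.
Set Implicit Arguments. Unset Strict Implicit. Unset Printing Implicit Defensive.
Import Order.TTheory GRing.Theory Num.Theory.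
Local Open Scope ring_scope.

Section InfiniteSwapping.
Variables (R : rcfType) (S : finType) (K : nat).
Variable Gamma : 'I_K -> S -> S -> R.
Variable mu : 'I_K -> S -> R.

Definition config := {ffun 'I_K -> S}.

Definition xperm (s : {perm 'I_K}) (x : config) : config :=
  [ffun i => x (s^-1%g i)].

Definition muprod (x : config) : R := \prod_(i < K) mu i (x i).

Definition rho (x : config) : R :=
  muprod x / \sum_(s : {perm 'I_K}) muprod (xperm s x).

Definition differ_only_at (x y : config) (i : 'I_K) : bool :=
  (x i != y i) && [forall j, (j != i) ==> (x j == y j)].

(* off-diagonal infinite swapping rates (zero unless x, y differ in exactly
   one coordinate; at most one i satisfies differ_only_at) *)
Definition Ginf (x y : config) : R :=
  \sum_(i < K | differ_only_at x y i)
     \sum_(s : {perm 'I_K}) rho (xperm s x) * Gamma (s i) (x i) (y i).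

Definition qinf (x : config) : R := \sum_(y | y != x) Ginf x y.

Definition mubar (x : config) : R :=
  (K`!%:R)^-1 * \sum_(s : {perm 'I_K}) muprod (xperm s x).

Definition Mmap (nu : config -> R) (x : config) : R :=
  rho x * \sum_(s : {perm 'I_K}) nu (xperm s x).

Definition Jfun (nu : config -> R) : R :=
  let theta := fun x => nu x / mubar x in
  \sum_x qinf x * theta x * mubar x
  - \sum_x \sum_(y | y != x)
      Num.sqrt (theta x) * Num.sqrt (theta y) * Ginf x y * mubar x.

Definition nu_sym (gamma : config -> R) (x : config) : R :=
  gamma x / (K`!%:R * rho x).

End InfiniteSwapping.

Definition is_prob (R : numDomainType) (T : finType) (p : T -> R) : Prop :=
  (forall t, 0 <= p t) /\ \sum_t p t = 1.

Definition is_intensity (R : numDomainType) (S : finType) (G : S -> S -> R) : Prop :=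
  (forall a b, a != b -> 0 <= G a b) /\ (forall a, \sum_b G a b = 0).

Definition irreducible_gen (R : numDomainType) (S : finType) (G : S -> S -> R) : Prop :=
  forall a b, connect [rel u v | (u != v) && (0 < G u v)] a b.

Definition is_invariant (R : numDomainType) (S : finType) (G : S -> S -> R) (m : S -> R) : Prop :=
  is_prob m /\ forall b, \sum_a m a * G a b = 0.

Definition reversible (R : numDomainType) (S : finType) (G : S -> S -> R) (m : S -> R) : Prop :=
  forall a b, m a * G a b = m b * G b a.

From HB Require Import structures.
From mathcomp Require Import all_boot all_order all_algebra all_fingroup.
From mathcomp Require Import ring lra.
Set Implicit Arguments. Unset Strict Implicit. Unset Printing Implicit Defensive.
Import Order.TTheory GRing.Theory Num.Theory.
Local Open Scope ring_scope.

(* If [M nu = gamma] then [nu_sym] is the average of [nu] over all coordinate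
   permutations.  The functional [J], written in terms of [theta = nu / mubar],
   is invariant under these permutations (so are [mubar], [q^inf] and
   [Gamma^inf]) and convex: its first term is linear and its cross term is a
   nonnegative combination of the geometric means [sqrt (theta x theta y)],
   which are concave by Cauchy-Schwarz.  Jensen's inequality then gives
   [J nu_sym <= J nu]. *)

Lemma cauchy_schwarz (R : rcfType) (I : finType) (u v : I -> R) :
  \sum_i u i * v i <= Num.sqrt (\sum_i u i ^+ 2) * Num.sqrt (\sum_i v i ^+ 2).
Proof.
set A := \sum_i u i ^+ 2; set B := \sum_i v i ^+ 2; set C := \sum_i u i * v i.
have lagrange : \sum_i \sum_j (u i * v j - u j * v i) ^+ 2 = 2 * (A * B) - 2 * C ^+ 2.
  have expand i j : (u i * v j - u j * v i) ^+ 2 =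
     u i ^+ 2 * v j ^+ 2 + v i ^+ 2 * u j ^+ 2 - 2 * ((u i * v i) * (u j * v j)).
    by ring.
  under eq_bigr do under eq_bigr do rewrite expand.
  rewrite (eq_bigr (fun i => u i ^+ 2 * B + v i ^+ 2 * A - 2 * ((u i * v i) * C))).
    rewrite sumrB big_split /= -!mulr_suml -mulr_sumr -mulr_suml.
    by rewrite /C expr2 -/C -/A -/B; ring.
  by move=> i _; rewrite sumrB big_split /= /A /B /C !mulr_sumr.
have : 0 <= \sum_i \sum_j (u i * v j - u j * v i) ^+ 2.
  by apply: sumr_ge0 => i _; apply: sumr_ge0 => j _; apply: sqr_ge0.
rewrite lagrange => lagrange_ge0.
have A_ge0 : 0 <= A by apply: sumr_ge0 => i _; apply: sqr_ge0.
have B_ge0 : 0 <= B by apply: sumr_ge0 => i _; apply: sqr_ge0.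
rewrite -sqrtrM //; apply: le_trans (ler_norm C) _.
by rewrite -sqrtr_sqr ler_wsqrtr //; lra.
Qed.

Lemma sum_sqrtrM_le (R : rcfType) (I : finType) (a b : I -> R) :
  (forall i, 0 <= a i) -> (forall i, 0 <= b i) ->
  \sum_i Num.sqrt (a i) * Num.sqrt (b i)
    <= Num.sqrt (\sum_i a i) * Num.sqrt (\sum_i b i).
Proof.
move=> a_ge0 b_ge0.
have sum_sqr (c : I -> R) : (forall i, 0 <= c i) -> \sum_i Num.sqrt (c i) ^+ 2 = \sum_i c i.
  by move=> c_ge0; apply: eq_bigr => i _; rewrite sqr_sqrtr.
by rewrite -(sum_sqr a) // -(sum_sqr b) //; apply: cauchy_schwarz.
Qed.

Section CoordinatePermutations.
Variables (R : rcfType) (S : finType) (K : nat).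

Local Notation config := (config S K).
Local Notation xperm := (@xperm S K).

Lemma xpermM (s t : {perm 'I_K}) x : xperm s (xperm t x) = xperm (t * s)%g x.
Proof. by apply/ffunP => i; rewrite !ffunE invMg permM. Qed.

Lemma xperm_inj s : injective (xperm s).
Proof.
apply: (can_inj (g := xperm s^-1%g)) => x.
by apply/ffunP => i; rewrite xpermM mulgV !ffunE invg1 perm1.
Qed.

Lemma sum_xperm s (F : config -> R) : \sum_x F (xperm s x) = \sum_x F x.
Proof. exact: esym (reindex_inj (@xperm_inj s)). Qed.

Lemma sum_perm_mulg t (F : {perm 'I_K} -> R) : \sum_s F (t * s)%g = \sum_s F s.
Proof. exact: esym (reindex_inj (mulgI t)). Qed.

Lemma sum_perm_xperm t (F : config -> R) x :
  \sum_(s : {perm 'I_K}) F (xperm s (xperm t x)) = \sum_s F (xperm s x).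
Proof.
under eq_bigr do rewrite xpermM.
exact: sum_perm_mulg (fun s => F (xperm s x)).
Qed.

Lemma sum_perm_const (a : R) : \sum_(s : {perm 'I_K}) a = a * K`!%:R.
Proof. by rewrite sumr_const card_Sn mulr_natr. Qed.

Lemma fact_gt0R : 0 < K`!%:R :> R.
Proof. by rewrite ltr0n fact_gt0. Qed.

Lemma differ_only_at_xperm t x y i :
  differ_only_at (xperm t x) (xperm t y) i = differ_only_at x y (t^-1%g i).
Proof.
rewrite /differ_only_at !ffunE; congr (_ && _).
apply/forallP/forallP => eq_off j.
  apply/implyP => j_neq; have := eq_off (t j); rewrite !ffunE permK => /implyP.
  by apply; apply: contra j_neq => /eqP <-; rewrite permK.
apply/implyP => j_neq; have := eq_off (t^-1%g j); rewrite !ffunE => /implyP.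
by apply; apply: contra j_neq => /eqP /perm_inj ->.
Qed.

Definition symmetrize (nu : config -> R) (x : config) : R :=
  (K`!%:R)^-1 * \sum_(s : {perm 'I_K}) nu (xperm s x).

Lemma symmetrize_xperm nu t x : symmetrize nu (xperm t x) = symmetrize nu x.
Proof. by rewrite /symmetrize sum_perm_xperm. Qed.

Lemma symmetrize_prob nu : is_prob nu -> is_prob (symmetrize nu).
Proof.
move=> [nu_ge0 nu_sum]; split=> [x|].
  by rewrite mulr_ge0 ?invr_ge0 ?ler0n ?sumr_ge0.
rewrite -mulr_sumr exchange_big /=.
under eq_bigr do rewrite sum_xperm nu_sum.
by rewrite sum_perm_const mul1r mulVf // gt_eqF // fact_gt0R.
Qed.

End CoordinatePermutations.

Section SwappingRates.
Variables (R : rcfType) (S : finType) (K : nat).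
Variable Gamma : 'I_K -> S -> S -> R.
Variable mu : 'I_K -> S -> R.
Hypothesis mu_gt0 : forall k a, 0 < mu k a.
Hypothesis Gamma_ge0 : forall k a b, a != b -> 0 <= Gamma k a b.

Local Notation config := (config S K).
Local Notation xperm := (@xperm S K).

Lemma muprod_gt0 x : 0 < muprod mu x.
Proof. by apply: prodr_gt0 => i _; apply: mu_gt0. Qed.

Lemma sum_muprod_gt0 x : 0 < \sum_(s : {perm 'I_K}) muprod mu (xperm s x).
Proof.
rewrite (bigD1 1%g) //=; apply: ltr_pwDl; first exact: muprod_gt0.
by apply: sumr_ge0 => s _; apply/ltW/muprod_gt0.
Qed.

Lemma rho_gt0 x : 0 < rho mu x.
Proof. by rewrite divr_gt0 ?muprod_gt0 ?sum_muprod_gt0. Qed.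

Lemma mubar_gt0 x : 0 < mubar mu x.
Proof. by rewrite mulr_gt0 ?invr_gt0 ?fact_gt0R ?sum_muprod_gt0. Qed.

Lemma mubar_xperm t x : mubar mu (xperm t x) = mubar mu x.
Proof. by rewrite /mubar sum_perm_xperm. Qed.

Lemma Ginf_xperm t x y :
  Ginf Gamma mu (xperm t x) (xperm t y) = Ginf Gamma mu x y.
Proof.
rewrite /Ginf (reindex_inj (@perm_inj _ t)) /=.
apply: eq_big => [j|j _]; first by rewrite differ_only_at_xperm permK.
rewrite !ffunE permK; under eq_bigr do rewrite xpermM -permM.
exact: (sum_perm_mulg t (fun s => rho mu (xperm s x) * Gamma (s j) (x j) (y j))).
Qed.

Lemma qinf_xperm t x : qinf Gamma mu (xperm t x) = qinf Gamma mu x.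
Proof.
rewrite /qinf (reindex_inj (@xperm_inj _ _ t)) /=.
apply: eq_big => [y|y _]; last by rewrite Ginf_xperm.
by rewrite (inj_eq (@xperm_inj _ _ t)).
Qed.

Lemma Ginf_ge0 x y : 0 <= Ginf Gamma mu x y.
Proof.
apply: sumr_ge0 => i /andP [xy_neq _]; apply: sumr_ge0 => s _.
by rewrite mulr_ge0 ?Gamma_ge0 // ltW // rho_gt0.
Qed.

Lemma Mmap_symmetrize nu : Mmap mu (symmetrize nu) =1 Mmap mu nu.
Proof.
move=> x; rewrite /Mmap; under eq_bigr do rewrite symmetrize_xperm.
rewrite sum_perm_const /symmetrize; congr (_ * _).
by rewrite mulrAC mulVf ?mul1r // gt_eqF // fact_gt0R.
Qed.

Lemma nu_sym_symmetrize gamma nu :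
  gamma =1 Mmap mu nu -> nu_sym mu gamma =1 symmetrize nu.
Proof.
move=> gammaE x; rewrite /nu_sym gammaE /Mmap /symmetrize.
have rho_x_gt0 := rho_gt0 x; have fact_gt0 := @fact_gt0R R K.
by field; rewrite !gt_eqF.
Qed.

Definition Jtheta (theta : config -> R) : R :=
  \sum_x qinf Gamma mu x * theta x * mubar mu x
  - \sum_x \sum_(y | y != x)
      Num.sqrt (theta x) * Num.sqrt (theta y) * Ginf Gamma mu x y * mubar mu x.

Lemma eq_Jtheta f g : f =1 g -> Jtheta f = Jtheta g.
Proof.
move=> fg; rewrite /Jtheta; congr (_ - _); apply: eq_bigr => x _.
  by rewrite fg.
by apply: eq_bigr => y _; rewrite !fg.
Qed.

Lemma JfunE nu : Jfun Gamma mu nu = Jtheta (fun x => nu x / mubar mu x).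
Proof. by []. Qed.

Lemma eq_Jfun nu nu' : nu =1 nu' -> Jfun Gamma mu nu = Jfun Gamma mu nu'.
Proof. by move=> nuE; rewrite !JfunE; apply: eq_Jtheta => x; rewrite nuE. Qed.

Lemma Jtheta_xperm t theta : Jtheta (fun x => theta (xperm t x)) = Jtheta theta.
Proof.
rewrite /Jtheta; congr (_ - _).
  rewrite -(sum_xperm t (fun x => qinf Gamma mu x * theta x * mubar mu x)).
  by apply: eq_bigr => x _; rewrite qinf_xperm mubar_xperm.
rewrite -(sum_xperm t (fun x => \sum_(y | y != x) Num.sqrt (theta x)
            * Num.sqrt (theta y) * Ginf Gamma mu x y * mubar mu x)).
apply: eq_bigr => x _; rewrite [RHS](reindex_inj (@xperm_inj _ _ t)) /=.
apply: eq_big => [y|y _]; first by rewrite (inj_eq (@xperm_inj _ _ t)).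
by rewrite Ginf_xperm mubar_xperm.
Qed.

Lemma Jtheta_sum_le (c : R) (F : {perm 'I_K} -> config -> R) :
  0 <= c -> (forall s x, 0 <= F s x) ->
  Jtheta (fun x => c * \sum_s F s x) <= c * \sum_s Jtheta (F s).
Proof.
move=> c_ge0 F_ge0; rewrite /Jtheta sumrB mulrBr.
have -> : c * \sum_s \sum_x qinf Gamma mu x * F s x * mubar mu x =
    \sum_x qinf Gamma mu x * (c * \sum_s F s x) * mubar mu x.
  rewrite exchange_big /= mulr_sumr; apply: eq_bigr => x _.
  by rewrite -mulr_suml -mulr_sumr; ring.
rewrite lerD2l lerN2 [in X in X <= _]exchange_big /= mulr_sumr; apply: ler_sum => x _.
rewrite [in X in X <= _]exchange_big /= mulr_sumr; apply: ler_sum => y _.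
have weight_ge0 : 0 <= Ginf Gamma mu x y * mubar mu x.
  by rewrite mulr_ge0 ?Ginf_ge0 // ltW // mubar_gt0.
rewrite -!mulr_suml -!mulrA [X in X <= _]mulrA [X in _ <= X]mulrA.
apply: ler_wpM2r => //.
have sum_ge0 z : 0 <= \sum_s F s z by apply: sumr_ge0.
rewrite !sqrtrM // mulrACA -expr2 sqr_sqrtr // ler_wpM2l //.
exact: sum_sqrtrM_le.
Qed.

Lemma Jfun_symmetrize_le nu :
  (forall x, 0 <= nu x) -> Jfun Gamma mu (symmetrize nu) <= Jfun Gamma mu nu.
Proof.
move=> nu_ge0; set theta := fun x => nu x / mubar mu x.
have theta_ge0 s x : 0 <= theta (xperm s x).
  by rewrite divr_ge0 // ltW // mubar_gt0.
have inv_fact_ge0 : 0 <= (K`!%:R : R)^-1 by rewrite invr_ge0 ler0n.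
rewrite JfunE [X in _ <= X]JfunE.
have -> : Jtheta (fun x => symmetrize nu x / mubar mu x)
    = Jtheta (fun x => (K`!%:R)^-1 * \sum_s theta (xperm s x)).
  apply: eq_Jtheta => x; rewrite /symmetrize -mulrA mulr_suml.
  by congr (_ * _); apply: eq_bigr => s _; rewrite /theta mubar_xperm.
apply: le_trans (Jtheta_sum_le inv_fact_ge0 theta_ge0) _.
under eq_bigr do rewrite Jtheta_xperm.
by rewrite sum_perm_const mulrCA mulVf ?mulr1 // gt_eqF // fact_gt0R.
Qed.

End SwappingRates.

Theorem proposition3p2 (R : rcfType) (S : finType) (K : nat)
  (Gamma : 'I_K -> S -> S -> R) (mu : 'I_K -> S -> R) :
  (2 <= K)%N ->
  (forall k, is_intensity (Gamma k)) ->
  (forall k, irreducible_gen (Gamma k)) ->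
  (forall k, is_invariant (Gamma k) (mu k)) ->
  (forall k m, is_invariant (Gamma k) m -> m =1 mu k) ->
  (forall k, reversible (Gamma k) (mu k)) ->
  (forall k a, 0 < mu k a) ->
  forall gamma : config S K -> R,
  is_prob gamma ->
  (exists nu : config S K -> R, is_prob nu /\ gamma =1 Mmap mu nu) ->
  [/\ is_prob (nu_sym mu gamma),
      gamma =1 Mmap mu (nu_sym mu gamma) &
      forall nu : config S K -> R, is_prob nu -> gamma =1 Mmap mu nu ->
        Jfun Gamma mu (nu_sym mu gamma) <= Jfun Gamma mu nu].
Proof.
move=> _ intensity _ _ _ _ mu_gt0 gamma _ [nu0 [nu0_prob gammaE]].
have Gamma_ge0 k a b : a != b -> 0 <= Gamma k a b.
  by case: (intensity k) => offdiag_ge0 _; apply: offdiag_ge0.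
have nu_symE := nu_sym_symmetrize mu_gt0 gammaE.
split.
- have [sym_ge0 sym_sum] := symmetrize_prob nu0_prob.
  split=> [x|]; first by rewrite nu_symE.
  by rewrite -sym_sum; apply: eq_bigr => x _; rewrite nu_symE.
- move=> x; rewrite gammaE -(Mmap_symmetrize mu nu0 x) /Mmap.
  by congr (_ * _); apply: eq_bigr => s _; rewrite nu_symE.
- move=> nu [nu_ge0 _] gammaE'.
  rewrite (eq_Jfun Gamma mu (nu_sym_symmetrize mu_gt0 gammaE')).
  exact: Jfun_symmetrize_le.
Qed.
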